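(* Let $f_{1,\infty}=\{f_n\}_{n=1}^\infty$ be a periodic sequence of continuous maps $f_n:[0,1]\to[0,1]$ (i.e. there is $k\in\mathbb{N}$ with $f_{j+kl}=f_j$ for all $l\in\mathbb{N}$, $1\le j\le k$). If $([0,1],f_{1,\infty})$ is multi-transitive, then it is strongly multi-sensitive.
   Context: Use the usual metric $d$ on $[0,1]$. Write $f_i^n=f_{n+i-1}\circ\cdots\circ f_i$, $f_i^0=\mathrm{id}$, and $f_{1,\infty}^{[k]}=\{f^k_{k(n-1)+1}\}_{n=1}^\infty$ (its $n$-fold composition from index $1$ is $f_1^{kn}$). The system is multi-transitive if for every $m\in\mathbb{N}$ and all nonempty open $U_1,\dots,U_m,V_1,\dots,V_m$ there is $k\in\mathbb{N}$ with $f_1^{ik}(U_i)\cap V_i\ne\varnothing$ for each $i=1,\dots,m$. For $V\subseteq X$, $\delta>0$: $N_{f_{1,\infty}}(V,\delta)=\{n\in\mathbb{N}:\exists u,v\in V,\ d(f_1^n(u),f_1^n(v))>\delta\}$. For $\mathbf{v}=(v_1,\dots,v_r)\in\mathbb{N}^r$, the system is multi-sensitive with respect to $\mathbf{v}$ if there is $\delta>0$ such that $\bigcap_{i=1}^r N_{f_{1,\infty}^{[v_i]}}(U_i,\delta)\ne\varnothing$ for all nonempty open $U_1,\dots,U_r$; it is strongly multi-sensitive if it is multi-sensitive with respect to every vector in $\mathbb{N}^r$, for every $r\in\mathbb{N}$. *)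

From Stdlib Require Import Reals Lra Lia.
Open Scope R_scope.

Definition I01 : Type := { x : R | 0 <= x <= 1 }.
Definition val01 (x : I01) : R := proj1_sig x.
Definition d01 (x y : I01) : R := Rabs (val01 x - val01 y).

Definition cont01 (g : I01 -> I01) : Prop :=
  forall x (eps : R), 0 < eps ->
    exists delta, 0 < delta /\
      forall y, d01 y x < delta -> d01 (g y) (g x) < eps.

Definition open01 (U : I01 -> Prop) : Prop :=
  forall x, U x -> exists eps, 0 < eps /\ forall y, d01 y x < eps -> U y.

Definition nonempty01 (U : I01 -> Prop) : Prop := exists x, U x.

(* A nonautonomous system f_{1,oo} = {f_n}_{n>=1} is a map nat -> (I01 -> I01);
   only indices n >= 1 are used (f 0 is irrelevant). *)

Fixpoint comp (f : nat -> I01 -> I01) (i n : nat) (x : I01) : I01 :=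
  match n with
  | O => x
  | S m => f (i + m)%nat (comp f i m x)
  end.

Definition block (f : nat -> I01 -> I01) (k : nat) : nat -> I01 -> I01 :=
  fun n => comp f (k * (n - 1) + 1)%nat k.

Definition periodic (f : nat -> I01 -> I01) : Prop :=
  exists k : nat, (1 <= k)%nat /\
    forall l j : nat, (1 <= l)%nat -> (1 <= j <= k)%nat -> f (j + k * l)%nat = f j.

Definition multi_transitive (f : nat -> I01 -> I01) : Prop :=
  forall (m : nat) (U V : nat -> I01 -> Prop), (1 <= m)%nat ->
    (forall i, (1 <= i <= m)%nat ->
       open01 (U i) /\ nonempty01 (U i) /\ open01 (V i) /\ nonempty01 (V i)) ->
    exists k : nat, (1 <= k)%nat /\
      forall i, (1 <= i <= m)%nat ->
        exists x, U i x /\ V i (comp f 1 (i * k) x).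

Definition Nset (f : nat -> I01 -> I01) (V : I01 -> Prop) (delta : R) (n : nat) : Prop :=
  (1 <= n)%nat /\
  exists u v, V u /\ V v /\ d01 (comp f 1 n u) (comp f 1 n v) > delta.

(* Multi-sensitivity with respect to v = (v_1,...,v_r) in N^r
   (v given as a function, only indices 1..r matter). *)
Definition multi_sensitive_wrt (f : nat -> I01 -> I01) (r : nat) (v : nat -> nat) : Prop :=
  exists delta, 0 < delta /\
    forall U : nat -> I01 -> Prop,
      (forall i, (1 <= i <= r)%nat -> open01 (U i) /\ nonempty01 (U i)) ->
      exists n, forall i, (1 <= i <= r)%nat -> Nset (block f (v i)) (U i) delta n.

Definition strongly_multi_sensitive (f : nat -> I01 -> I01) : Prop :=
  forall (r : nat) (v : nat -> nat), (1 <= r)%nat ->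
    (forall i, (1 <= i <= r)%nat -> (1 <= v i)%nat) ->
    multi_sensitive_wrt f r v.

(* Let p be a period of f and h = f_1^p, so that f_1^(p n) = h^n. Multi-transitivity of f, used
   on the two slots s and 2s, makes h^k carry a point of an interval A into an interval B to its
   right and h^(2k) carry a point of B back into A; the intermediate value theorem then gives a
   fixed point of h^k or h^(2k) between them, so periodic points of h are dense. In an open set U
   pick periodic points q1 < q2 with a common period M: H = h^M fixes both, hence H [q1, q2]
   contains [q1, q2] and the images H^j [q1, q2] increase with j. Transitivity makes some image
   meet [0, 1/4) and a later one meet (3/4, 1], after which all images have diameter > 1/2. So h^t
   spreads U by 1/2 for all large multiples t of M, which is uniform over finitely many U_i and
   compatible with any multipliers v_i. *)

From Stdlib Require Import Reals Lra Lia ProofIrrelevance.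
Open Scope R_scope.

Lemma val01_range (x : I01) : 0 <= val01 x <= 1.
Proof. exact (proj2_sig x). Qed.

Lemma val01_inj (x y : I01) : val01 x = val01 y -> x = y.
Proof.
  destruct x as [x Hx], y as [y Hy]; unfold val01; simpl; intros ->.
  f_equal; apply proof_irrelevance.
Qed.

Lemma proj01_subproof (t : R) : 0 <= Rmax 0 (Rmin t 1) <= 1.
Proof. unfold Rmax, Rmin; repeat destruct Rle_dec; lra. Qed.

Definition proj01 (t : R) : I01 := exist _ (Rmax 0 (Rmin t 1)) (proj01_subproof t).

Lemma val01_proj01 (t : R) : 0 <= t <= 1 -> val01 (proj01 t) = t.
Proof. intros; unfold proj01, val01; simpl; unfold Rmax, Rmin; repeat destruct Rle_dec; lra. Qed.

Lemma proj01_val01 (x : I01) : proj01 (val01 x) = x.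
Proof. apply val01_inj, val01_proj01, val01_range. Qed.

Lemma proj01_lipschitz (s t : R) : d01 (proj01 s) (proj01 t) <= Rabs (s - t).
Proof.
  unfold d01, proj01, val01; simpl; unfold Rmax, Rmin; repeat destruct Rle_dec;
  unfold Rabs; repeat destruct Rcase_abs; lra.
Qed.

Lemma cont01_continuity (g : I01 -> I01) :
  cont01 g -> continuity (fun t => val01 (g (proj01 t))).
Proof.
  intros Hg t eps Heps.
  destruct (Hg (proj01 t) eps Heps) as [delta [Hdelta Hclose]].
  exists delta; split; auto.
  intros s [_ Hs]; simpl in *; unfold R_dist in *.
  apply Hclose. eapply Rle_lt_trans; [apply proj01_lipschitz | exact Hs].
Qed.

Lemma ivt01 (phi : R -> R) (a b : I01) :
  continuity phi -> val01 a <= val01 b -> phi (val01 a) * phi (val01 b) <= 0 ->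
  exists x, val01 a <= val01 x <= val01 b /\ phi (val01 x) = 0.
Proof.
  intros Hphi Hab Hsign.
  destruct (IVT_cor phi (val01 a) (val01 b) Hphi Hab Hsign) as [t [Ht Hzero]].
  pose proof (val01_range a); pose proof (val01_range b).
  exists (proj01 t). rewrite val01_proj01 by lra. auto.
Qed.

Lemma fixed_point_between (g : I01 -> I01) (a b : I01) :
  cont01 g -> val01 a <= val01 b ->
  val01 a <= val01 (g a) -> val01 (g b) <= val01 b ->
  exists x, val01 a <= val01 x <= val01 b /\ g x = x.
Proof.
  intros Hg Hab Ha Hb.
  destruct (ivt01 (fun t => val01 (g (proj01 t)) - t) a b) as [x [Hx Hfix]]; auto.
  - exact (continuity_minus _ _ (cont01_continuity g Hg)
                    (derivable_continuous _ derivable_id)).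
  - rewrite !proj01_val01. nra.
  - rewrite proj01_val01 in Hfix. exists x. split; auto. apply val01_inj; lra.
Qed.

Lemma onto_between_fixed_points (g : I01 -> I01) (a b : I01) :
  cont01 g -> g a = a -> g b = b -> val01 a <= val01 b ->
  forall y, val01 a <= val01 y <= val01 b ->
  exists x, val01 a <= val01 x <= val01 b /\ g x = y.
Proof.
  intros Hg Ha Hb Hab y Hy.
  destruct (ivt01 (fun t => val01 (g (proj01 t)) - val01 y) a b) as [x [Hx Hval]]; auto.
  - exact (continuity_minus _ _ (cont01_continuity g Hg)
             (continuity_const (fun _ => val01 y) (fun _ _ => eq_refl))).
  - rewrite !proj01_val01, Ha, Hb. nra.
  - rewrite proj01_val01 in Hval. exists x. split; auto. apply val01_inj; lra.
Qed.

Lemma cont01_comp (g h : I01 -> I01) : cont01 g -> cont01 h -> cont01 (fun x => g (h x)).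
Proof.
  intros Hg Hh x eps Heps.
  destruct (Hg (h x) eps Heps) as [d1 [Hd1 H1]].
  destruct (Hh x d1 Hd1) as [d2 [Hd2 H2]].
  exists d2; split; auto.
Qed.

Lemma cont01_iter (g : I01 -> I01) (n : nat) : cont01 g -> cont01 (Nat.iter n g).
Proof.
  intros Hg; induction n as [|n IH]; simpl.
  - intros x eps Heps. exists eps; split; auto.
  - exact (cont01_comp g _ Hg IH).
Qed.

Lemma fixed_point_or_2cycle (g : I01 -> I01) (y z : I01) :
  cont01 g -> val01 y < val01 (g y) -> val01 (g (g z)) <= val01 z -> val01 y <= val01 z ->
  exists x, val01 y <= val01 x <= Rmax (val01 (g y)) (val01 z) /\ (g x = x \/ g (g x) = x).
Proof.
  intros Hg Hy Hz Hyz.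
  pose proof (Rmax_l (val01 (g y)) (val01 z)); pose proof (Rmax_r (val01 (g y)) (val01 z)).
  destruct (Rle_dec (val01 (g (g y))) (val01 (g y))) as [Hdown | Hup].
  - destruct (fixed_point_between g y (g y)) as [x [Hx Hfix]]; auto; try lra.
    exists x. split; [lra | auto].
  - destruct (fixed_point_between (fun x => g (g x)) y z) as [x [Hx Hfix]];
      auto using cont01_comp; try lra.
    exists x. split; [lra | auto].
Qed.

Lemma iter_mul {A : Type} (g : A -> A) (m n : nat) (x : A) :
  Nat.iter (m * n) g x = Nat.iter n (Nat.iter m g) x.
Proof.
  induction n as [|n IH]; simpl; [now rewrite Nat.mul_0_r|].
  rewrite Nat.mul_succ_r, Nat.add_comm, Nat.iter_add, IH. reflexivity.
Qed.

Lemma iter_fixed {A : Type} (g : A -> A) (n t : nat) (x : A) :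
  Nat.iter n g x = x -> Nat.iter (n * t) g x = x.
Proof.
  intros Hx. rewrite iter_mul.
  induction t as [|t IH]; simpl; congruence.
Qed.

Lemma iter_images_grow (g : I01 -> I01) (a b : I01) :
  cont01 g -> g a = a -> g b = b -> val01 a <= val01 b ->
  forall x, val01 a <= val01 x <= val01 b -> forall j0 j, (j0 <= j)%nat ->
  exists x', val01 a <= val01 x' <= val01 b /\ Nat.iter j g x' = Nat.iter j0 g x.
Proof.
  intros Hg Ha Hb Hab x Hx j0 j Hj.
  induction Hj as [|j _ [x' [Hx' Hiter]]].
  - exists x. auto.
  - destruct (onto_between_fixed_points g a b Hg Ha Hb Hab x' Hx') as [x'' [Hx'' Hgx'']].
    exists x''. split; auto.
    rewrite Nat.iter_succ_r, Hgx''. exact Hiter.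
Qed.

Definition interval01 (a b : R) : I01 -> Prop := fun x => a < val01 x < b.

Definition open_nonempty01 (U : I01 -> Prop) : Prop := open01 U /\ nonempty01 U.

Lemma open_nonempty01_interval (a b : R) :
  0 <= a < b -> b <= 1 -> open_nonempty01 (interval01 a b).
Proof.
  intros Hab Hb. split.
  - intros x Hx. exists (Rmin (val01 x - a) (b - val01 x)). split.
    + unfold interval01 in Hx. apply Rmin_pos; lra.
    + intros y Hy. unfold d01 in Hy. apply Rabs_def2 in Hy.
      pose proof (Rmin_l (val01 x - a) (b - val01 x)).
      pose proof (Rmin_r (val01 x - a) (b - val01 x)).
      unfold interval01 in *. lra.
  - exists (proj01 ((a + b) / 2)). unfold interval01. rewrite val01_proj01; lra.
Qed.

Lemma open_nonempty01_full : open_nonempty01 (fun _ => True).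
Proof.
  split.
  - intros x _. exists 1. split; auto. lra.
  - exists (proj01 0). exact I.
Qed.

Lemma interval_in_open01 (U : I01 -> Prop) :
  open_nonempty01 U -> exists a b, 0 <= a < b /\ b <= 1 /\ forall y, interval01 a b y -> U y.
Proof.
  intros [HU [x0 Hx0]].
  destruct (HU x0 Hx0) as [eps [Heps Hball]].
  pose proof (val01_range x0).
  exists (Rmax 0 (val01 x0 - eps / 2)), (Rmin 1 (val01 x0 + eps / 2)).
  split; [|split].
  - unfold Rmax, Rmin; repeat destruct Rle_dec; lra.
  - apply Rmin_l.
  - intros y Hy. apply Hball. unfold interval01, d01 in *. apply Rabs_def1;
      unfold Rmax, Rmin in Hy; repeat destruct Rle_dec; lra.
Qed.

Definition pair_multi_transitive (g : I01 -> I01) : Prop :=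
  forall (s : nat) (U1 V1 U2 V2 : I01 -> Prop), (1 <= s)%nat ->
    open_nonempty01 U1 -> open_nonempty01 V1 -> open_nonempty01 U2 -> open_nonempty01 V2 ->
    exists k, (1 <= k)%nat /\
      (exists x, U1 x /\ V1 (Nat.iter (s * k) g x)) /\
      (exists x, U2 x /\ V2 (Nat.iter (2 * (s * k)) g x)).

Lemma pair_multi_transitive_iter (g : I01 -> I01) (M : nat) :
  (1 <= M)%nat -> pair_multi_transitive g -> pair_multi_transitive (Nat.iter M g).
Proof.
  intros HM Hg s U1 V1 U2 V2 Hs HU1 HV1 HU2 HV2.
  destruct (Hg (M * s)%nat U1 V1 U2 V2) as [k [Hk [[x1 [Hx1 Hy1]] [x2 [Hx2 Hy2]]]]];
    auto; try lia.
  exists k. split; auto.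
  replace (2 * (M * s * k))%nat with (M * (2 * (s * k)))%nat in Hy2 by lia.
  rewrite <- Nat.mul_assoc, iter_mul in Hy1; rewrite iter_mul in Hy2.
  split; eauto.
Qed.

Lemma periodic_point_in_interval (g : I01 -> I01) (a b : R) :
  cont01 g -> pair_multi_transitive g -> 0 <= a < b -> b <= 1 ->
  exists q n, (1 <= n)%nat /\ a < val01 q < b /\ Nat.iter n g q = q.
Proof.
  intros Hg Htr Hab Hb.
  set (c1 := a + (b - a) / 3); set (c2 := b - (b - a) / 3).
  destruct (Htr 1%nat (interval01 a c1) (interval01 c2 b) (interval01 c2 b) (interval01 a c1))
    as [k [Hk [[y [Hy HGy]] [z [Hz HGGz]]]]];
    try apply open_nonempty01_interval; unfold c1, c2 in *; try lra; try lia.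
  rewrite Nat.mul_1_l in HGy, HGGz.
  replace (2 * k)%nat with (k + k)%nat in HGGz by lia; rewrite Nat.iter_add in HGGz.
  unfold interval01 in *.
  destruct (fixed_point_or_2cycle (Nat.iter k g) y z) as [x [Hx [Hfix | Hfix]]];
    auto using cont01_iter; try lra;
    pose proof (Rmax_lub_lt _ _ b (proj2 HGy) (proj2 Hz)).
  - exists x, k. split; auto. split; [lra | auto].
  - exists x, (k + k)%nat. split; [lia|]. split; [lra|]. rewrite Nat.iter_add. exact Hfix.
Qed.

Lemma periodic_points_common_period (g : I01 -> I01) (a b : R) :
  cont01 g -> pair_multi_transitive g -> 0 <= a < b -> b <= 1 ->
  exists q1 q2 M, (1 <= M)%nat /\ a < val01 q1 < val01 q2 /\ val01 q2 < b /\
    Nat.iter M g q1 = q1 /\ Nat.iter M g q2 = q2.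
Proof.
  intros Hg Htr Hab Hb.
  destruct (periodic_point_in_interval g a ((a + b) / 2)) as [q1 [M1 [HM1 [Hq1 Hfix1]]]];
    auto; try lra.
  destruct (periodic_point_in_interval g ((a + b) / 2) b) as [q2 [M2 [HM2 [Hq2 Hfix2]]]];
    auto; try lra.
  exists q1, q2, (M1 * M2)%nat. split; [nia|]. split; [lra|]. split; [lra|].
  split; [now apply iter_fixed|].
  rewrite Nat.mul_comm. now apply iter_fixed.
Qed.

Definition holds_on_large_multiples (P : nat -> Prop) : Prop :=
  exists L B, (1 <= L)%nat /\ forall c, (B <= c)%nat -> P (L * c)%nat.

Lemma holds_on_large_multiples_forall (r : nat) (P : nat -> nat -> Prop) :
  (forall i, (1 <= i <= r)%nat -> holds_on_large_multiples (P i)) ->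
  holds_on_large_multiples (fun t => forall i, (1 <= i <= r)%nat -> P i t).
Proof.
  induction r as [|r IH]; intros HP.
  - exists 1%nat, 0%nat. split; [lia|]. intros; lia.
  - destruct IH as [L1 [B1 [HL1 H1]]]; [intros i Hi; apply HP; lia|].
    destruct (HP (S r) ltac:(lia)) as [L2 [B2 [HL2 H2]]].
    exists (L1 * L2)%nat, (B1 + B2)%nat. split; [nia|].
    intros c Hc i Hi. destruct (Nat.eq_dec i (S r)) as [->|Hne].
    + replace (L1 * L2 * c)%nat with (L2 * (L1 * c))%nat by ring. apply H2. nia.
    + rewrite <- Nat.mul_assoc. apply H1; [nia | lia].
Qed.

Lemma eventually_spreads (g : I01 -> I01) (U : I01 -> Prop) :
  cont01 g -> pair_multi_transitive g -> open_nonempty01 U ->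
  holds_on_large_multiples (fun t =>
    exists u v, U u /\ U v /\ d01 (Nat.iter t g u) (Nat.iter t g v) > 1 / 2).
Proof.
  intros Hg Htr HU.
  destruct (interval_in_open01 U HU) as [a [b [Hab [Hb HabU]]]].
  destruct (periodic_points_common_period g a b Hg Htr Hab Hb)
    as [q1 [q2 [M [HM [Hq1 [Hq2 [Hfix1 Hfix2]]]]]]].
  set (G := Nat.iter M g).
  pose proof (val01_range q1); pose proof (val01_range q2).
  destruct (pair_multi_transitive_iter g M HM Htr 1%nat
              (interval01 (val01 q1) (val01 q2)) (interval01 0 (1 / 4))
              (interval01 (val01 q1) (val01 q2)) (interval01 (3 / 4) 1))
    as [k [Hk [[x1 [Hx1 Hlow]] [x2 [Hx2 Hhigh]]]]];
    try apply open_nonempty01_interval; try lra; try lia.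
  rewrite Nat.mul_1_l in Hlow, Hhigh. fold G in Hlow, Hhigh.
  unfold interval01 in *.
  exists M, (2 * k)%nat. split; auto. intros c Hc.
  destruct (iter_images_grow G q1 q2 (cont01_iter g M Hg) Hfix1 Hfix2 ltac:(lra)
              x1 ltac:(lra) k c ltac:(lia)) as [u [Hu HGu]].
  destruct (iter_images_grow G q1 q2 (cont01_iter g M Hg) Hfix1 Hfix2 ltac:(lra)
              x2 ltac:(lra) (2 * k) c ltac:(lia)) as [v [Hv HGv]].
  exists u, v. split; [apply HabU; unfold interval01; lra|].
  split; [apply HabU; unfold interval01; lra|].
  unfold d01. rewrite !iter_mul. fold G. rewrite HGu, HGv.
  unfold Rabs; destruct Rcase_abs; lra.
Qed.

Lemma periodic_period (f : nat -> I01 -> I01) :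
  periodic f -> exists p, (1 <= p)%nat /\ forall n l, (1 <= n)%nat -> f (n + p * l)%nat = f n.
Proof.
  intros [p [Hp Hper]]. exists p. split; auto. intros n l Hn.
  pose proof (Nat.div_mod_eq (n - 1) p) as Hdiv.
  pose proof (Nat.mod_upper_bound (n - 1) p ltac:(lia)) as Hmod.
  set (j := ((n - 1) mod p + 1)%nat) in *; set (q := ((n - 1) / p)%nat) in *.
  assert (Hj : forall l', f (j + p * l')%nat = f j).
  { intros [|l']; [now rewrite Nat.mul_0_r, Nat.add_0_r | apply Hper; unfold j; lia]. }
  replace (n + p * l)%nat with (j + p * (q + l))%nat by (unfold j; nia).
  replace (f n) with (f (j + p * q)%nat) by (f_equal; unfold j; lia).
  now rewrite !Hj.
Qed.

Lemma comp_add (f : nat -> I01 -> I01) (i n m : nat) (x : I01) :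
  comp f i (n + m)%nat x = comp f (i + n)%nat m (comp f i n x).
Proof.
  induction m as [|m IH]; [now rewrite Nat.add_0_r|].
  rewrite Nat.add_succ_r. simpl. now rewrite IH, Nat.add_assoc.
Qed.

Lemma comp_cont01 (f : nat -> I01 -> I01) (i n : nat) :
  (forall n, (1 <= n)%nat -> cont01 (f n)) -> (1 <= i)%nat -> cont01 (comp f i n).
Proof.
  intros Hf Hi. induction n as [|n IH].
  - intros x eps Heps. exists eps; split; auto.
  - apply (cont01_comp (f (i + n)%nat)); auto. apply Hf; lia.
Qed.

Section Periodic.

Variables (f : nat -> I01 -> I01) (p : nat).
Hypothesis f_periodic : forall n l, (1 <= n)%nat -> f (n + p * l)%nat = f n.

Lemma comp_shift_period (a m : nat) (x : I01) : comp f (1 + p * a)%nat m x = comp f 1 m x.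
Proof.
  induction m as [|m IH]; [reflexivity|]. cbn [comp].
  rewrite IH. replace (1 + p * a + m)%nat with (1 + m + p * a)%nat by lia.
  now rewrite f_periodic by lia.
Qed.

Lemma comp_period_iter (n : nat) (x : I01) :
  comp f 1 (p * n)%nat x = Nat.iter n (comp f 1 p) x.
Proof.
  induction n as [|n IH]; [now rewrite Nat.mul_0_r|].
  rewrite Nat.mul_succ_r, comp_add, comp_shift_period, IH. reflexivity.
Qed.

Lemma multi_transitive_period :
  (1 <= p)%nat -> multi_transitive f -> pair_multi_transitive (comp f 1 p).
Proof.
  intros Hp Hmt s U1 V1 U2 V2 Hs HU1 HV1 HU2 HV2.
  set (slot := fun (W1 W2 : I01 -> Prop) (i : nat) =>
         if Nat.eq_dec i (p * s) then W1
         else if Nat.eq_dec i (2 * (p * s)) then W2 else fun _ => True).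
  assert (Hslot : forall W1 W2 i, open_nonempty01 W1 -> open_nonempty01 W2 ->
                    open_nonempty01 (slot W1 W2 i)).
  { intros W1 W2 i H1 H2. unfold slot.
    destruct Nat.eq_dec; [|destruct Nat.eq_dec]; auto using open_nonempty01_full. }
  destruct (Hmt (2 * (p * s))%nat (slot U1 U2) (slot V1 V2)) as [k [Hk Hhit]]; [lia| |].
  { intros i _. destruct (Hslot U1 U2 i HU1 HU2), (Hslot V1 V2 i HV1 HV2). auto. }
  exists k. split; auto.
  destruct (Hhit (p * s)%nat ltac:(nia)) as [x1 Hx1].
  destruct (Hhit (2 * (p * s))%nat ltac:(nia)) as [x2 Hx2].
  unfold slot in Hx1, Hx2.
  destruct (Nat.eq_dec (p * s) (p * s)) as [_|]; [|lia].
  destruct (Nat.eq_dec (2 * (p * s)) (p * s)); [lia|].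
  destruct (Nat.eq_dec (2 * (p * s)) (2 * (p * s))) as [_|]; [|lia].
  rewrite <- Nat.mul_assoc, comp_period_iter in Hx1.
  replace (2 * (p * s) * k)%nat with (p * (2 * (s * k)))%nat in Hx2 by lia.
  rewrite comp_period_iter in Hx2.
  split; eauto.
Qed.

End Periodic.

Lemma block_comp (f : nat -> I01 -> I01) (v n : nat) (x : I01) :
  comp (block f v) 1 n x = comp f 1 (v * n)%nat x.
Proof.
  induction n as [|n IH]; simpl; [now rewrite Nat.mul_0_r|].
  rewrite IH. unfold block. rewrite Nat.mul_succ_r, comp_add.
  f_equal. lia.
Qed.

Theorem mainTheorem3 (f : nat -> I01 -> I01) :
  (forall n : nat, (1 <= n)%nat -> cont01 (f n)) ->
  periodic f ->
  multi_transitive f ->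
  strongly_multi_sensitive f.
Proof.
  intros Hf Hper Hmt r v Hr Hv.
  destruct (periodic_period f Hper) as [p [Hp Hfp]].
  set (h := comp f 1 p).
  assert (Hh : cont01 h) by (apply comp_cont01; auto).
  assert (Hhtr : pair_multi_transitive h) by (apply multi_transitive_period; auto).
  exists (1 / 2). split; [lra|]. intros U HU.
  destruct (holds_on_large_multiples_forall r _
              (fun i Hi => eventually_spreads h (U i) Hh Hhtr (HU i Hi)))
    as [L [B [HL HLB]]].
  exists (p * (L * (B + 1)))%nat. intros i Hi. split; [nia|].
  specialize (Hv i Hi).
  destruct (HLB (v i * (B + 1))%nat ltac:(nia) i Hi) as [u [w [Hu [Hw Hsep]]]].
  exists u, w. split; [|split]; auto.
  rewrite !block_comp.
  replace (v i * (p * (L * (B + 1))))%nat with (p * (L * (v i * (B + 1))))%nat by ring.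
  now rewrite !comp_period_iter.
Qed.
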